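(* Let $G$ be an infinite, connected, locally finite graph. If $S$ is a finite set of vertices of $G$ and $U$ is an infinite set of vertices of $G$, then $S$ does not doubly resolve $U$.
   Context: $d$ denotes shortest-path distance in $G$. Two vertices $x,y$ doubly resolve a pair of vertices $u,v$ if $d(u,x)-d(v,x)\neq d(u,y)-d(v,y)$. For sets $S,U$ of vertices, $S$ doubly resolves $U$ if every pair of distinct vertices of $U$ is doubly resolved by some two vertices of $S$. *)

From Stdlib Require Import Arith ZArith List ClassicalEpsilon.
Import ListNotations.

Definition simple_graph {V : Type} (adj : V -> V -> Prop) : Prop :=
  (forall x y, adj x y -> adj y x) /\ (forall x, ~ adj x x).

Inductive walk {V : Type} (adj : V -> V -> Prop) : V -> V -> nat -> Prop :=
| walk_nil : forall x, walk adj x x 0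
| walk_cons : forall x y z n, adj x y -> walk adj y z n -> walk adj x z (S n).

Definition connected {V : Type} (adj : V -> V -> Prop) : Prop :=
  forall x y, exists n, walk adj x y n.

Definition locally_finite {V : Type} (adj : V -> V -> Prop) : Prop :=
  forall v, exists l : list V, forall w, adj v w -> In w l.

Definition finite_set {V : Type} (A : V -> Prop) : Prop :=
  exists l : list V, forall x, A x -> In x l.

Definition infinite_set {V : Type} (A : V -> Prop) : Prop := ~ finite_set A.

Definition infinite_type (V : Type) : Prop := infinite_set (fun _ : V => True).

Definition is_dist {V : Type} (adj : V -> V -> Prop) (x y : V) (n : nat) : Prop :=
  walk adj x y n /\ forall m, walk adj x y m -> n <= m.

(* Shortest-path distance d(x,y) (meaningful when x and y are connected). *)
Definition dist {V : Type} (adj : V -> V -> Prop) (x y : V) : nat :=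
  epsilon (inhabits 0) (is_dist adj x y).

Definition doubly_resolve_pair {V : Type} (adj : V -> V -> Prop) (x y u v : V) : Prop :=
  (Z.of_nat (dist adj u x) - Z.of_nat (dist adj v x)
   <> Z.of_nat (dist adj u y) - Z.of_nat (dist adj v y))%Z.

Definition doubly_resolves {V : Type} (adj : V -> V -> Prop) (S U : V -> Prop) : Prop :=
  forall u v, U u -> U v -> u <> v ->
    exists x y, S x /\ S y /\ doubly_resolve_pair adj x y u v.

From Stdlib Require Import Arith ZArith List ClassicalEpsilon.
From Stdlib Require Import Classical Lia.
Import ListNotations.

(* Fix a vertex s0 and an enumeration lS of S.  Attach to every vertex u its
   signature, the integer vector (d(u,x) - d(u,s0)) for x in lS.
   - If two vertices u <> v have the same signature, then
     d(u,x) - d(v,x) = d(u,s0) - d(v,s0) for every x in S, so no two vertices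
     of S doubly resolve u and v.  Hence, if S doubly resolves U, the
     signature is injective on U.
   - By the triangle inequality, the entry of index x of any signature lies in
     [-B, B] with B independent of u, so all signatures belong to a fixed
     finite list of integer vectors.
   An injection of U into a finite list forces U to be finite. *)

Lemma least_witness (P : nat -> Prop) :
  (exists n, P n) -> exists n, P n /\ forall m, P m -> n <= m.
Proof.
  intros [n Hn]. induction n as [n IH] using lt_wf_ind.
  destruct (classic (exists m, m < n /\ P m)) as [[m [Hmn Hm]] | Hnone].
  - exact (IH m Hmn Hm).
  - exists n. split; [exact Hn |]. intros m Hm.
    destruct (le_lt_dec n m) as [Hle | Hlt]; [exact Hle |].
    exfalso. apply Hnone. eauto.
Qed.

Lemma walk_app {V : Type} (adj : V -> V -> Prop) x y z n m :
  walk adj x y n -> walk adj y z m -> walk adj x z (n + m).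
Proof.
  induction 1 as [| x' y' z' n' Hxy _ IH]; intros Hyz; simpl; [exact Hyz |].
  econstructor; eauto.
Qed.

Section Distance.
Variables (V : Type) (adj : V -> V -> Prop).
Hypothesis Hconn : connected adj.

Lemma dist_spec x y : is_dist adj x y (dist adj x y).
Proof.
  unfold dist. apply epsilon_spec, least_witness, Hconn.
Qed.

Lemma dist_triangle a b c : dist adj a c <= dist adj a b + dist adj b c.
Proof.
  destruct (dist_spec a c) as [_ Hmin].
  apply Hmin, (walk_app adj a b c); apply dist_spec.
Qed.

End Distance.

Lemma finite_of_injective_into_list {V T : Type} (g : V -> T) (L : list T) :
  forall A : V -> Prop,
  (forall u v, A u -> A v -> g u = g v -> u = v) ->
  (forall u, A u -> In (g u) L) -> finite_set A.
Proof.
  induction L as [| c L IH]; intros A Hinj Hin.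
  - exists []. intros x Ax. exact (Hin x Ax).
  - destruct (classic (exists a, A a /\ g a = c)) as [[a [Aa Hga]] | Hnone].
    + (* a is the only element of A hit at c; the rest maps into L *)
      destruct (IH (fun x => A x /\ g x <> c)) as [l Hl].
      * intros u v [Au _] [Av _]. apply Hinj; assumption.
      * intros u [Au Hgu]. destruct (Hin u Au); [congruence | assumption].
      * exists (a :: l). intros x Ax.
        destruct (classic (g x = c)) as [Hgx | Hgx].
        -- left. apply Hinj; congruence.
        -- right. apply Hl. auto.
    + apply IH; [exact Hinj |]. intros u Au.
      destruct (Hin u Au) as [Hc | HL]; [| exact HL].
      exfalso. apply Hnone. eauto.
Qed.

Fixpoint int_box (n B : nat) : list (list Z) :=
  match n with
  | 0 => [[]]
  | S n => flat_map (fun z => map (cons z) (int_box n B))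
             (map (fun k => Z.of_nat k - Z.of_nat B)%Z (seq 0 (2 * B + 1)))
  end.

Lemma int_box_complete B v :
  Forall (fun z => - Z.of_nat B <= z <= Z.of_nat B)%Z v ->
  In v (int_box (length v) B).
Proof.
  induction v as [| z v IH]; intros Hbounds; simpl; [auto |].
  inversion Hbounds as [| ? ? Hz Hv]; subst.
  apply in_flat_map. exists z. split.
  - apply in_map_iff. exists (Z.to_nat (z + Z.of_nat B)).
    split; [lia | apply in_seq; lia].
  - apply in_map, IH, Hv.
Qed.

Lemma le_list_max_map {A : Type} (h : A -> nat) (l : list A) x :
  In x l -> h x <= list_max (map h l).
Proof.
  intros Hx.
  pose proof (proj1 (list_max_le (map h l) _) (le_n _)) as Hall.
  rewrite Forall_forall in Hall. apply Hall, in_map, Hx.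
Qed.

Section Signature.
Variables (V : Type) (adj : V -> V -> Prop) (s0 : V) (lS : list V).

Definition signature (u : V) : list Z :=
  map (fun x => Z.of_nat (dist adj u x) - Z.of_nat (dist adj u s0))%Z lS.

Lemma equal_signature_unresolved u v x y :
  signature u = signature v -> In x lS -> In y lS ->
  ~ doubly_resolve_pair adj x y u v.
Proof.
  unfold signature, doubly_resolve_pair. intros Heq Hx Hy.
  rewrite map_ext_in_iff in Heq.
  pose proof (Heq x Hx). pose proof (Heq y Hy). lia.
Qed.

Hypothesis Hconn : connected adj.

Lemma signature_in_box u :
  In (signature u)
     (int_box (length lS)
        (list_max (map (fun x => dist adj s0 x + dist adj x s0) lS))).
Proof.
  rewrite <- (length_map (fun x => Z.of_nat (dist adj u x)
                                   - Z.of_nat (dist adj u s0))%Z lS).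
  apply int_box_complete, Forall_forall. intros z Hz.
  apply in_map_iff in Hz as [x [<- Hx]].
  pose proof (le_list_max_map (fun x => dist adj s0 x + dist adj x s0) lS x Hx).
  pose proof (dist_triangle V adj Hconn u s0 x).
  pose proof (dist_triangle V adj Hconn u x s0).
  cbn beta in *.
  lia.
Qed.

End Signature.

Theorem lemma5 (V : Type) (adj : V -> V -> Prop)
  (Hsimple : simple_graph adj) (Hinf : infinite_type V)
  (Hconn : connected adj) (Hlf : locally_finite adj)
  (S U : V -> Prop) (HS : finite_set S) (HU : infinite_set U) :
  ~ doubly_resolves adj S U.
Proof.
  intros Hres. apply HU.
  destruct HS as [lS HlS].
  destruct (classic (exists s0 : V, U s0)) as [[s0 _] | Hempty].
  2: { exists []. intros x Ux. apply Hempty. eauto. }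
  eapply (finite_of_injective_into_list (signature V adj s0 lS)).
  - intros u v Uu Uv Hsig.
    apply NNPP. intros Hne.
    destruct (Hres u v Uu Uv Hne) as [x [y [Sx [Sy Hxy]]]].
    exact (equal_signature_unresolved V adj s0 lS u v x y Hsig
             (HlS x Sx) (HlS y Sy) Hxy).
  - intros u _. apply signature_in_box, Hconn.
Qed.
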